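(* For all $k,m\in\mathbb{N}$, \[ Q(1,2k+1;2)=0\qquad\text{and}\qquad Q(m+1,2k-1;2)=0. \]
   Context: $s(n,k)$ ($n\ge k\ge 0$) denotes the signed Stirling numbers of the first kind, defined by $\frac{[\ln(1+x)]^k}{k!}=\sum_{n=k}^\infty s(n,k)\frac{x^n}{n!}$ for $|x|<1$; equivalently $\prod_{j=0}^{n-1}(z-j)=\sum_{k=0}^n s(n,k)z^k$. For $m\in\mathbb{N}$, $k\in\mathbb{N}_0$ and $\alpha\in\mathbb{R}$ define \[ Q(m,k;\alpha)=\sum_{\ell=0}^{k}\binom{m+\ell-1}{m-1}\, s(m+k-1,m+\ell-1)\left(\frac{m+k-\alpha}{2}\right)^{\ell}, \] with the convention $0^0=1$. *)

From HB Require Import structures.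
From mathcomp Require Import all_boot all_order all_algebra.
From mathcomp Require Import all_reals.
Set Implicit Arguments. Unset Strict Implicit. Unset Printing Implicit Defensive.
Import Order.TTheory GRing.Theory Num.Theory.
Local Open Scope ring_scope.

Definition stirling1 (n k : nat) : int :=
  (\prod_(j < n) ('X - (j%:R)%:P) : {poly int})`_k.

(* Q(m,k;alpha) = sum_{l=0}^k C(m+l-1, m-1) s(m+k-1, m+l-1) ((m+k-alpha)/2)^l,
   with 0^0 = 1 (as x ^+ 0 = 1). *)
Definition Q (R : realFieldType) (m k : nat) (alpha : R) : R :=
  \sum_(l < k.+1)
     ('C(m + l - 1, m - 1))%:R * (stirling1 (m + k - 1) (m + l - 1))%:~R
       * ((((m + k)%:R - alpha) / 2) ^+ l).

From HB Require Import structures.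
From mathcomp Require Import all_boot all_order all_algebra.
From mathcomp Require Import all_reals.
From mathcomp Require Import ring.
Import Order.TTheory GRing.Theory Num.Theory.
Local Open Scope ring_scope.

(* Write P_N(z) = prod_{j<N} (z - j), whose coefficients are the Stirling
   numbers s(N, .).  Expanding P_{n+K}(z + c) binomially shows that
   Q(n+1, K; a) is the coefficient of z^n in P_{n+K}(z + c), where
   c = (n+1+K-a)/2.  For a = 2 we get c = (N-1)/2 with N = n+K; the roots
   j - c (j < N) of z |-> P_N(z + c) are then symmetric about 0, so this
   polynomial has parity (-1)^N and its coefficient of z^n vanishes whenever
   n + N = 2n + K is odd, i.e. whenever K is odd. *)

Section Coefficients.
Variable R : comNzRingType.

Lemma coef_XaddC_exp (c : R) (i n : nat) :
  (('X + c%:P) ^+ i)`_n = c ^+ (i - n) *+ 'C(i, n).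
Proof.
rewrite addrC exprDn.
under eq_bigr => j _ do rewrite -polyC_exp mul_polyC scalerMnl.
rewrite coef_sumMXn (big_ord1_eq _ (fun j => c ^+ (i - j) *+ 'C(i, j))) ltnS.
by case: leqP => // lt_in; rewrite bin_small.
Qed.

Lemma coef_comp_polyN (q : {poly R}) (n : nat) :
  (q \Po - 'X)`_n = (-1) ^+ n * q`_n.
Proof.
rewrite comp_polyE.
under eq_bigr => i _ do rewrite -scaleN1r exprZn scalerA.
rewrite coef_sumMXn (big_ord1_eq _ (fun j => q`_j * (-1) ^+ j)) mulrC.
by case: ltnP => // le_q_n; rewrite nth_default ?mulr0.
Qed.

End Coefficients.

(* A polynomial of parity (-1)^N, i.e. with q(-X) = (-1)^N q(X), has no
   monomial X^n with n + N odd (2 is not a zero divisor in a numDomain). *)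
Lemma coef_wrong_parity (R : numDomainType) (q : {poly R}) (N n : nat) :
  q \Po - 'X = (-1) ^+ N *: q -> odd (n + N) -> q`_n = 0.
Proof.
move=> /(congr1 (fun p : {poly R} => p`_n)) /=.
rewrite coef_comp_polyN coefZ => parity odd_nN.
have anti : q`_n = - q`_n.
  rewrite -{1}[q`_n](signrMK N) -parity mulrA -exprD -signr_odd.
  by rewrite addnC odd_nN mulN1r.
have twice_zero : q`_n *+ 2 = 0 by rewrite mulr2n {1}anti addNr.
by move/eqP: twice_zero; rewrite mulrn_eq0 => /eqP.
Qed.

Section FallingFactorial.
Variable R : comNzRingType.

Definition falling_poly (N : nat) : {poly R} := \prod_(j < N) ('X - j%:R%:P).

Lemma stirling1_falling_poly (N i : nat) :
  (stirling1 N i)%:~R = (falling_poly N)`_i.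
Proof.
rewrite /stirling1 -coef_map rmorph_prod; congr (_`_i).
by under eq_bigr => j _ do rewrite rmorphB /= map_polyX map_polyC /= rmorph_nat.
Qed.

Lemma size_falling_poly (N : nat) : size (falling_poly N) = N.+1.
Proof. by rewrite size_prod_XsubC /index_enum /= -enumT size_enum_ord. Qed.

(* For c = (N-1)/2 the roots j - c (j < N) of P_N(X + c) are symmetric
   about 0, i.e. j |-> N-1-j maps each linear factor to minus another one;
   hence P_N(X + c) has parity (-1)^N. *)
Lemma centred_falling_poly_parity (N : nat) (c : R) :
  c *+ 2 = N%:R - 1 ->
  falling_poly N \Po ('X + c%:P) \Po - 'X
    = (-1) ^+ N *: (falling_poly N \Po ('X + c%:P)).
Proof.
move=> centre.
have shifted : falling_poly N \Po ('X + c%:P)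
             = \prod_(j < N) ('X + (c - j%:R)%:P).
  rewrite rmorph_prod; apply: eq_bigr => j _.
  by rewrite /= comp_polyB comp_polyX comp_polyC polyCB addrA.
have mirror (j : 'I_N) : (- 'X + (c - (rev_ord j)%:R)%:P : {poly R})
                        = - ('X + (c - j%:R)%:P).
  have lt_jN : (j < N)%N := ltn_ord j.
  have -> : (rev_ord j)%:R = N%:R - 1 - j%:R :> R.
    by rewrite /= natrB // -addn1 natrD; ring.
  rewrite [RHS]opprD -polyCN; congr (_ + _%:P).
  by rewrite -centre mulr2n; ring.
rewrite shifted rmorph_prod (reindex_inj rev_ord_inj) /=.
under eq_bigr => j _ do rewrite comp_polyD comp_polyX comp_polyC mirror.
by rewrite prodrN card_ord -mul_polyC rmorphXn rmorphN1.
Qed.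

End FallingFactorial.

(* Q(n+1, K; a) is the coefficient of X^n in P_{n+K}(X + c), c = (n+1+K-a)/2:
   the binomial expansion of P_{n+K}(X + c) contributes
   C(n+l, n) s(n+K, n+l) c^l to that coefficient for each l <= K. *)
Lemma Q_shifted_falling_coef (R : realFieldType) (n K : nat) (a : R) :
  Q n.+1 K a
    = (falling_poly R (n + K) \Po ('X + (((n.+1 + K)%:R - a) / 2)%:P))`_n.
Proof.
set c := ((n.+1 + K)%:R - a) / 2.
rewrite coef_comp_poly size_falling_poly -addnS big_split_ord /=.
rewrite big1 ?add0r => [|i _]; last first.
  by rewrite coef_XaddC_exp bin_small ?mulr0n ?mulr0.
apply: eq_bigr => l _; rewrite coef_XaddC_exp stirling1_falling_poly addKn.
by rewrite /c !addSn !subn1 /= mulr_natl mulrnAl mulrnAr.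
Qed.

(* Q(n+1, K; 2) = 0 for every odd K: with a = 2 the centre c is (N-1)/2 for
   N = n+K, and n + N = 2n + K is odd. *)
Lemma Q_at_two_odd (R : realFieldType) (n K : nat) :
  odd K -> Q n.+1 K (2 : R) = 0.
Proof.
move=> odd_K; rewrite Q_shifted_falling_coef.
apply: (@coef_wrong_parity _ _ (n + K)).
  apply: centred_falling_poly_parity.
  by rewrite addSn -addn1 natrD mulr2n; field.
by rewrite addnA oddD addnn odd_double.
Qed.

Theorem corollary2p2 (R : realType) (k m : nat) (hk : (1 <= k)%N) (hm : (1 <= m)%N) :
  Q (1%N) (2 * k + 1)%N (2 : R) = 0 /\ Q (m + 1)%N (2 * k - 1)%N (2 : R) = 0.
Proof.
split; first by apply: Q_at_two_odd; rewrite oddD oddM.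
rewrite addn1; apply: Q_at_two_odd.
by case: k hk => // k _; rewrite mulnS add2n subn1 /= oddM.
Qed.
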